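(* Let $p,t\geq 1$ be integers and let $m,n$ be even positive integers with $m\leq n$. Let $G$ be a regular graph of order $p$. If (i) $m+n\equiv 0\pmod 4$ and (ii) $1=2(2ptn+1)^2-(2ptm+2ptn+1)^2$ or $m\geq(\sqrt2-1)n+\frac{\sqrt2-1}{2pt}$, then $tK_{m,n}\otimes G$ is distance magic.
   Context: A graph $G$ on $v$ vertices is distance magic if there is a bijection $f:V(G)\to\{1,\ldots,v\}$ and a constant $k$ such that for every vertex $x$, $\sum_{y\in N(x)}f(y)=k$, where $N(x)$ is the set of neighbours of $x$. $K_{m,n}$ is the complete bipartite graph with parts of sizes $m$ and $n$; $tH$ denotes the disjoint union of $t$ copies of $H$. The Kronecker (tensor) product $G\otimes H$ has vertex set $V(G)\times V(H)$, with $(g,h)\sim(g',h')$ iff $gg'\in E(G)$ and $hh'\in E(H)$. *)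

From Stdlib Require Import Reals ZArith.
From mathcomp Require Import all_boot.

Set Implicit Arguments.
Unset Strict Implicit.
Unset Printing Implicit Defensive.

Definition simple_graph (V : finType) (e : rel V) : Prop :=
  symmetric e /\ irreflexive e.

Definition regular (V : finType) (e : rel V) : Prop :=
  exists r : nat, forall x : V, #|[set y | e x y]| = r.

(* Distance magic: a bijection f : V -> {1,...,|V|} and a constant k with
   sum_{y in N(x)} f y = k for all x.  (An injective map of V into
   {1,...,|V|} is exactly a bijection onto it.) *)
Definition distance_magic (V : finType) (e : rel V) : Prop :=
  exists f : V -> nat,
    injective f /\ (forall x, 1 <= f x <= #|V|) /\
    exists k : nat, forall x : V, \sum_(y | e x y) f y = k.

Definition kron_rel (V W : finType) (e1 : rel V) (e2 : rel W) : rel (V * W) :=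
  fun u v => e1 u.1 v.1 && e2 u.2 v.2.

Definition tKmn_rel (t m n : nat) : rel ('I_t * ('I_m + 'I_n)) :=
  fun u v =>
    (u.1 == v.1) &&
    match u.2, v.2 with
    | inl _, inr _ => true
    | inr _, inl _ => true
    | _, _ => false
    end.

Definition cond_pell (p t m n : nat) : Prop :=
  let P := Z.of_nat p in let T := Z.of_nat t in
  let M := Z.of_nat m in let N := Z.of_nat n in
  (1 = 2 * (2*P*T*N + 1)^2 - (2*P*T*M + 2*P*T*N + 1)^2)%Z.

Section Reals_cond.
Local Open Scope R_scope.
Definition cond_ineq (p t m n : nat) : Prop :=
  (INR m >= (sqrt 2 - 1) * INR n + (sqrt 2 - 1) / (2 * INR p * INR t)).
End Reals_cond.

Arguments tKmn_rel : clear implicits.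

(* Write q = t|V|, m = 2m', n = 2(m' + 2d) and h = m' + d (condition (i) and the
   parities give this shape).  It suffices to split the labels 1..q(m+n) into q
   blocks of size m and q blocks of size n, all with the same sum A = h(4qh + 1):
   give the m-part (resp. n-part) of copy c above vertex g of G the blocks indexed
   by (c, g); every vertex of tK_{m,n} (x) G then sees, for each of its deg(G)
   neighbours in G, a full block of the opposite part, hence the sum deg(G) A.
   The blocks are cut out of the array whose row r holds rq + 1, ..., rq + q.
   Block b of size m takes one entry in each of the rows a, ..., a + m except
   a + m - e, alternately in column b and q - 1 - b; the blocks of size n share
   the other rows in the same way.  The residue rho of d modulo q is then moved
   from the n-blocks to the m-blocks: one entry of each m-block advances rho
   places in the array, one entry of each n-block moves back rho places
   cyclically within its row, and the n-blocks' entries in rows a + m - e - 1 and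
   a + m - e fill the gap.  The numbers a, e are chosen so that the m-blocks sum to A,
   and condition (ii), in the form 4qd^2 + d <= 2qm'^2, makes them fit in the
   m + n rows. *)

From Stdlib Require Import Reals ZArith Lra Lia.
From mathcomp Require Import all_boot zify.

Set Implicit Arguments.
Unset Strict Implicit.
Unset Printing Implicit Defensive.

Lemma sum_ord_id m : 2 * \sum_(i < m) i + m = m * m.
Proof.
elim: m => [|m IHm]; first by rewrite big_ord0.
move: IHm; rewrite big_ord_recr /=; set S := \sum_(i < m) i; lia.
Qed.

Lemma sum_ord_geq m c : \sum_(i < m) (c <= i) = m - c.
Proof.
elim: m => [|m IHm]; first by rewrite big_ord0.
by rewrite big_ord_recr /= IHm; case: leqP; lia.
Qed.

Lemma sum_ord_eq m k : \sum_(i < m) (i == k :> nat) = (k < m).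
Proof.
elim: m => [|m IHm]; first by rewrite big_ord0.
by rewrite big_ord_recr /= IHm; case: ltngtP; lia.
Qed.

Lemma sum_ord_odd k c (g : bool -> nat) :
  \sum_(i < 2 * k) g (odd (i + c)) = k * (g true + g false).
Proof.
elim: k => [|k IHk]; first by rewrite big_ord0.
rewrite (_ : 2 * k.+1 = (2 * k).+2) ?big_ord_recr /= ?IHk; last by lia.
rewrite -addnA mulSn addnC; congr (_ + _).
by case: (odd _) => //; rewrite addnC.
Qed.

Definition balanced_labeling (B : finType) (m n : nat)
    (L : B -> 'I_m + 'I_n -> nat) (A : nat) : Prop :=
  [/\ injective (fun x : B * ('I_m + 'I_n) => L x.1 x.2),
      forall b s, 0 < L b s <= #|B| * (m + n),
      forall b, \sum_(i < m) L b (inl i) = A &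
      forall b, \sum_(j < n) L b (inr j) = A].

Lemma sum_kron_rel (U V : finType) (E : rel U) (e : rel V) x (f : U * V -> nat) :
  \sum_(y | kron_rel E e x y) f y = \sum_(v | e x.2 v) \sum_(u | E x.1 u) f (u, v).
Proof.
rewrite exchange_big pair_big_dep /=.
by apply: eq_bigr => -[].
Qed.

Lemma sum_tKmn_rel t m n c (s : 'I_m + 'I_n) (F : 'I_t * ('I_m + 'I_n) -> nat) :
  \sum_(u | tKmn_rel t m n (c, s) u) F u =
  if s is inl _ then \sum_(j < n) F (c, inr j) else \sum_(i < m) F (c, inl i).
Proof.
transitivity (\sum_(c' | c' == c)
                \sum_(s' | tKmn_rel t m n (c, s) (c, s')) F (c', s')).
  rewrite pair_big_dep (eq_bigr (fun u => F (u.1, u.2))) => [|[] //].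
  by apply: eq_bigl => -[c' s']; rewrite /tKmn_rel /= eq_sym eqxx.
rewrite big_pred1_eq big_sumType.
by case: s => ?; rewrite /tKmn_rel /= eqxx big_pred0_eq ?add0n ?addn0.
Qed.

Lemma kron_tKmn_distance_magic t m n (V : finType) (e : rel V) A
    (L : 'I_t * V -> 'I_m + 'I_n -> nat) :
  regular e -> balanced_labeling L A ->
  distance_magic (kron_rel (tKmn_rel t m n) e).
Proof.
move=> [r reg_e] [inj_L L_range sum_inl sum_inr].
exists (fun x => L (x.1.1, x.2) x.1.2); split; [|split].
- move=> [[c s] g] [[c' s'] g'] /= eq_L.
  by case: (inj_L ((c, g), s) ((c', g'), s') eq_L) => -> -> ->.
- move=> [[c s] g]; have := L_range (c, g) s.
  by rewrite !card_prod card_sum !card_ord /=; lia.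
- exists (r * A) => -[[c s] g]; rewrite sum_kron_rel /=.
  under eq_bigr => g' _ do rewrite sum_tKmn_rel.
  by case: s => ?; rewrite (eq_bigr (fun=> A)) => [|g' _] /=;
    rewrite ?sum_nat_cond_const ?reg_e ?sum_inl ?sum_inr.
Qed.

Section Construction.

Variables q m' d dl rho a e : nat.

Local Notation m := (2 * m').
Local Notation n := (2 * (m' + 2 * d)).
Local Notation h := (m' + d).

(* [balance] makes the m-blocks sum to A, [fits] keeps them inside the array. *)
Hypothesis rho_lt_q : rho < q.
Hypothesis d_eq : d = dl * q + rho.
Hypothesis e_lt_m : e < m.
Hypothesis balance : a * m + e + 2 * m' ^ 2 = 4 * h ^ 2 + dl.
Hypothesis fits : q * (a * m + e) + rho <= q * (m * n).

Lemma a_bound : a < n \/ a = n /\ e = 0 /\ rho = 0.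
Proof.
case: (ltnP a n) => [|le_n_a]; [by left | right].
have : q * (n * m) <= q * (a * m) by rewrite leq_mul2l leq_mul2r le_n_a !orbT.
nia.
Qed.

Definition flip (s : bool) b := if s then q - 1 - b else b.
Definition i_rho := m - e.+1.
(* Any index j < n with j != a and the parity of a would do. *)
Definition j_rho := if a < 2 then a.+2 else a - 2.

(* The blocks of index [b] as (row, column) positions; (r, o) carries r q + o + 1. *)
Definition cellX i b : nat * nat :=
  if i == i_rho then
    if b + rho < q then (a + i_rho, b + rho) else (a + i_rho + 1, b + rho - q)
  else (if i < m - e then a + i else a + i + 1, flip (odd (i + i_rho)) b).

Definition cellY j b : nat * nat :=
  if j == a then (if b < rho then a + i_rho else a + i_rho + 1, b)
  else (if j < a then j else j + m,
        if j == j_rho then (if b < rho then b + q - rho else b - rho)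
        else flip (odd (j + a)) b).

Definition label (c : nat * nat) := c.1 * q + c.2.

Lemma flip_inj s b b' : b < q -> b' < q -> flip s b = flip s b' -> b = b'.
Proof. by rewrite /flip; case: s; lia. Qed.

Lemma label_inj c c' : c.2 < q -> c'.2 < q -> label c = label c' -> c = c'.
Proof.
case: c c' => [r o] [r' o']; rewrite /label /= => lt_o lt_o' eq_l.
have q_gt0 : 0 < q by lia.
have eq_o : o = o'.
  by have := congr1 (modn^~ q) eq_l; rewrite /= !modnMDl !modn_small.
have eq_r : r = r'.
  by have := congr1 (divn^~ q) eq_l; rewrite /= !divnMDl // !divn_small // !addn0.
by rewrite eq_o eq_r.
Qed.

Lemma label_lt k c : c.1 < k -> c.2 < q -> label c < k * q.
Proof. by case: c => r o /= lt_r lt_o; rewrite /label /=; nia. Qed.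

Lemma cellX_lt i b : i < m -> b < q -> (cellX i b).1 < m + n /\ (cellX i b).2 < q.
Proof.
move=> lt_i lt_b; have := a_bound.
by rewrite /cellX /flip /i_rho; repeat case: ifP => ? /=; lia.
Qed.

Lemma cellY_lt j b : j < n -> b < q -> (cellY j b).1 < m + n /\ (cellY j b).2 < q.
Proof.
move=> lt_j lt_b.
by rewrite /cellY /flip /i_rho /j_rho; repeat case: ifP => ? /=; lia.
Qed.

Lemma cellX_inj i i' b b' : i < m -> i' < m -> b < q -> b' < q ->
  cellX i b = cellX i' b' -> i = i' /\ b = b'.
Proof.
move=> lt_i lt_i' lt_b lt_b'; rewrite /cellX /i_rho.
case: eqP => [->|ne_i]; case: eqP => [->|ne_i'].
- by do 2 case: ifP => ?; case; lia.
- by do 2 case: ifP => ?; case=> eq_row _; lia.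
- by do 2 case: ifP => ?; case=> eq_row _; lia.
case=> eq_row eq_off.
have eq_i : i = i' by move: eq_row; do 2 case: ifP => ?; lia.
by subst i'; split=> //; apply: flip_inj eq_off.
Qed.

Lemma cellY_inj j j' b b' : b < q -> b' < q ->
  cellY j b = cellY j' b' -> j = j' /\ b = b'.
Proof.
move=> lt_b lt_b'; rewrite /cellY /i_rho.
case: (eqVneq j a) => [->|ne_j]; case: (eqVneq j' a) => [->|ne_j'].
- by case=> _ ->.
- by repeat case: ifP => ?; case=> eq_row _; lia.
- by repeat case: ifP => ?; case=> eq_row _; lia.
case=> eq_row eq_off.
have eq_j : j = j' by move: eq_row; do 2 case: ifP => ?; lia.
subst j'; split=> //; move: eq_off.
by case: ifP => _; [do 2 case: ifP => ?; lia | exact: flip_inj].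
Qed.

Lemma cellX_neq_cellY i j b b' : i < m -> b < q -> b' < q -> cellX i b <> cellY j b'.
Proof.
move=> lt_i lt_b lt_b'; rewrite /cellX /cellY /i_rho.
by case: (eqVneq j a) => [_|ne_j]; repeat case: ifP => ?; case; lia.
Qed.

Lemma flip_sum k c b : b < q -> \sum_(i < 2 * k) flip (odd (i + c)) b = k * q - k.
Proof.
by move=> lt_b; rewrite (sum_ord_odd _ _ (flip^~ b)) /flip subnK ?mulnBr ?muln1 //; lia.
Qed.

Lemma labelX_eq i b : i < m -> b < q ->
  label (cellX i b) =
  a * q + i * q + (m - e <= i) * q + flip (odd (i + i_rho)) b + (i == i_rho) * rho.
Proof.
move=> lt_i lt_b; rewrite /label /cellX.
case: (eqVneq i i_rho) => [->|ne_i].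
  rewrite addnn odd_double /flip /i_rho /=; case: ifP => /= ?; lia.
by case: ifP => ?; case: leqP => ? /=; lia.
Qed.

Lemma sum_cellX b : b < q -> \sum_(i < m) (label (cellX i b)).+1 = h * (4 * q * h + 1).
Proof.
move=> lt_b.
rewrite (eq_bigr (fun i : 'I_m => a * q + i * q + (m - e <= i) * q +
  flip (odd (i + i_rho)) b + (i == i_rho :> nat) * rho + 1)); last first.
  by move=> i _; rewrite labelX_eq ?addn1.
rewrite !big_split /= -!big_distrl /= !sum_nat_const card_ord sum_ord_geq.
rewrite sum_ord_eq flip_sum // subKn ?(ltnW e_lt_m) // (_ : i_rho < m); last first.
  by rewrite /i_rho; lia.
have := congr1 (muln q) (sum_ord_id m); have := congr1 (muln q) balance.
have : m' <= m' * q by rewrite leq_pmulr //; lia.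
set S := \sum_(i < m) i; lia.
Qed.

Lemma j_rho_neq_a : j_rho != a.
Proof. by rewrite /j_rho; case: ifP; lia. Qed.

Lemma odd_j_rho_a : odd (j_rho + a) = false.
Proof. by rewrite /j_rho; case: ifP => ?; lia. Qed.

Lemma j_rho_lt_n : 0 < rho -> j_rho < n.
Proof. by have := a_bound; rewrite /j_rho; case: ifP; lia. Qed.

Lemma labelY_eq j b : b < q ->
  (label (cellY j b)).+1 + (j == a) * (b < rho) * q + (j == j_rho) * rho =
  j * q + (j == a) * i_rho.+1 * q + (a < j) * (m * q) + flip (odd (j + a)) b
  + (j == j_rho) * (b < rho) * q + 1.
Proof.
move=> lt_b; rewrite /label /cellY.
case: (eqVneq j a) => [->|ne_j].
  rewrite addnn odd_double ltnn eq_sym (negbTE j_rho_neq_a) /flip.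
  by case: (ltnP b rho) => ? /=; lia.
case: (eqVneq j j_rho) => [eq_j|ne_j_rho].
  rewrite eq_j odd_j_rho_a /flip in ne_j *.
  by case: (ltngtP j_rho a) ne_j => [? _|? _|//]; case: (ltnP b rho) => ? /=; lia.
by case: (ltngtP j a) ne_j => [? _|? _|//] /=; lia.
Qed.

Lemma sum_cellY b : b < q -> \sum_(j < n) (label (cellY j b)).+1 = h * (4 * q * h + 1).
Proof.
move=> lt_b.
have : \sum_(j < n) ((label (cellY j b)).+1 + (j == a :> nat) * (b < rho) * q
                    + (j == j_rho :> nat) * rho) =
       \sum_(j < n) (j * q + (j == a :> nat) * i_rho.+1 * q + (a < j) * (m * q)
                    + flip (odd (j + a)) b + (j == j_rho :> nat) * (b < rho) * q + 1).
  by apply: eq_bigr => j _; exact: labelY_eq.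
rewrite !big_split -!big_distrl !sum_ord_eq sum_ord_geq sum_nat_const card_ord.
rewrite flip_sum //= mulnBl.
have := congr1 (muln q) (sum_ord_id n); have := congr1 (muln q) balance.
have : m' + 2 * d <= (m' + 2 * d) * q by rewrite leq_pmulr; lia.
have : i_rho.+1 * q + e * q = m * q by rewrite -mulnDl /i_rho; congr (_ * _); lia.
set S := \sum_(i < n) i; set T := \sum_(i < n) (label (cellY i b)).+1.
case: a_bound => [lt_a_n | [-> [-> ->]]]; last first.
  by rewrite ltnn ltn0 !muln0 /=; lia.
have : a.+1 * (m * q) <= n * (m * q) by rewrite leq_mul2r lt_a_n orbT.
rewrite lt_a_n; case: (posnP rho) => [rho0 | /j_rho_lt_n ->]; rewrite ?rho0 ?ltn0 /=; lia.
Qed.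

Lemma balanced_labeling_of_cells (B : finType) : #|B| = q ->
  exists L : B -> 'I_m + 'I_n -> nat, balanced_labeling L (h * (4 * q * h + 1)).
Proof.
move=> card_B; pose col (x : B) : nat := enum_rank x.
have col_lt x : col x < q by rewrite -card_B ltn_ord.
have col_inj : injective col by move=> x y /val_inj /enum_rank_inj.
pose cell x (s : 'I_m + 'I_n) :=
  match s with inl i => cellX i (col x) | inr j => cellY j (col x) end.
have cell_lt x s : (cell x s).1 < m + n /\ (cell x s).2 < q.
  by case: s => [i|j]; [exact: cellX_lt | exact: cellY_lt].
exists (fun x s => (label (cell x s)).+1); split.
- move=> [x s] [y s'] /= [] /label_inj eq_cells.
  move: {eq_cells}(eq_cells (cell_lt x s).2 (cell_lt y s').2).
  case: s s' => [i|j] [i'|j'] /=.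
  + by case/cellX_inj=> // /val_inj -> /col_inj ->.
  + by move/(cellX_neq_cellY (ltn_ord i) (col_lt x) (col_lt y)).
  + by move/esym/(cellX_neq_cellY (ltn_ord i') (col_lt y) (col_lt x)).
  + by case/cellY_inj=> // /val_inj -> /col_inj ->.
- move=> x s; rewrite card_B mulnC; exact: label_lt (cell_lt x s).1 (cell_lt x s).2.
- by move=> x; exact: sum_cellX.
- by move=> x; exact: sum_cellY.
Qed.
End Construction.

Lemma balanced_labeling_exists (B : finType) m' d :
  0 < #|B| -> 0 < m' -> 4 * #|B| * d ^ 2 + d <= 2 * #|B| * m' ^ 2 ->
  exists L : B -> 'I_(2 * m') + 'I_(2 * (m' + 2 * d)) -> nat,
    balanced_labeling L ((m' + d) * (4 * #|B| * (m' + d) + 1)).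
Proof.
set q := #|B| => q_gt0 m'_gt0 feasible.
set T := 4 * (m' + d) ^ 2 + d %/ q - 2 * m' ^ 2.
have le_T : 2 * m' ^ 2 <= 4 * (m' + d) ^ 2 + d %/ q by nia.
have d_eq := divn_eq d q; have T_eq := divn_eq T (2 * m').
apply: (@balanced_labeling_of_cells q m' d (d %/ q) (d %% q) (T %/ (2 * m')) (T %% (2 * m'))).
- by rewrite ltn_mod.
- by [].
- by rewrite ltn_mod; lia.
- by rewrite -T_eq /T; lia.
- rewrite -T_eq; have := congr1 (muln q) (subnK le_T); rewrite -/T; lia.
- by [].
Qed.

Lemma cond_pell_feasible p t m n : 0 < p -> 0 < t -> cond_pell p t m n ->
  2 * (p * t) * n ^ 2 + n = (p * t) * (m + n) ^ 2 + m.
Proof.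
rewrite /cond_pell => p_gt0 t_gt0 pell.
set Q := (Z.of_nat p * Z.of_nat t)%Z.
have : (4 * Q * (2 * Q * Z.of_nat n ^ 2 + Z.of_nat n
         - Q * (Z.of_nat m + Z.of_nat n) ^ 2 - Z.of_nat m) = 0)%Z by rewrite /Q; lia.
case/Z.mul_eq_0 => [|]; rewrite /Q; nia.
Qed.

Section RealCondition.
Local Open Scope R_scope.

Lemma cond_ineq_feasible p t m n : (0 < p)%N -> (0 < t)%N -> cond_ineq p t m n ->
  (2 * (p * t) * n ^ 2 + n <= (p * t) * (m + n) ^ 2 + m)%N.
Proof.
move=> p_gt0 t_gt0; rewrite /cond_ineq (_ : 2 * INR p * INR t = 2 * (INR p * INR t));
  last by ring.
move=> ineq; apply/leP; apply: INR_le.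
rewrite -!mulnn -!multE -!plusE !plus_INR !mult_INR !plus_INR (_ : INR 2 = 2) //.
have Q_ge1 : 1 <= INR p * INR t.
  by have := le_INR 1 p (leP p_gt0); have := le_INR 1 t (leP t_gt0); rewrite /=; nra.
have M_ge0 := pos_INR m; have N_ge0 := pos_INR n.
set Q := INR p * INR t in ineq Q_ge1 *; set M := INR m in ineq M_ge0 *.
set N := INR n in ineq N_ge0 *.
set u := / (2 * Q); rewrite /Rdiv -/u in ineq.
have Qu : 2 * Q * u = 1 by rewrite /u; field; lra.
have u_gt0 : 0 < u by apply: Rinv_0_lt_compat; lra.
have s_ge0 := sqrt_pos 2.
have s_sq : sqrt 2 * sqrt 2 = 2 by apply: sqrt_sqrt; lra.
have le_sNu : sqrt 2 * (N + u) <= M + N + u by lra.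
have le_sq : 2 * ((N + u) * (N + u)) <= (M + N + u) * (M + N + u).
  have sNu_ge0 : 0 <= sqrt 2 * (N + u) by apply: Rmult_le_pos => //; lra.
  rewrite (_ : 2 * ((N + u) * (N + u)) = sqrt 2 * (N + u) * (sqrt 2 * (N + u))).
    exact: Rmult_le_compat.
  by rewrite -[X in X * (_ * _) = _]s_sq; ring.
have Q_ge0 : 0 <= Q by lra.
have := Rmult_le_compat_l _ _ _ Q_ge0 le_sq.
nra.
Qed.
End RealCondition.

Theorem theorem20 (p t m n : nat) (V : finType) (e : rel V) :
  1 <= p -> 1 <= t ->
  0 < m -> 0 < n -> ~~ odd m -> ~~ odd n -> m <= n ->
  simple_graph e -> regular e -> #|V| = p ->
  (m + n) %% 4 = 0 ->
  (cond_pell p t m n \/ cond_ineq p t m n) ->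
  distance_magic (kron_rel (tKmn_rel t m n) e).
Proof.
move=> p_gt0 t_gt0 m_gt0 _ m_even n_even le_mn _ reg_e card_V mod4 cond.
have feasible : 2 * (p * t) * n ^ 2 + n <= (p * t) * (m + n) ^ 2 + m.
  by case: cond => [/(cond_pell_feasible p_gt0 t_gt0)-> | /(cond_ineq_feasible p_gt0 t_gt0)].
have [m' [d [eq_m eq_n]]] : exists m' d, m = 2 * m' /\ n = 2 * (m' + 2 * d).
  by exists m./2, ((n - m) %/ 4); lia.
subst m n.
have card_B : #|{: 'I_t * V}| = t * p by rewrite card_prod card_ord card_V.
have [|||L balanced] := balanced_labeling_exists (B := ('I_t * V)%type) (m' := m') (d := d).
- by rewrite card_B muln_gt0 t_gt0.
- by lia.
- by rewrite card_B; lia.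
exact: kron_tKmn_distance_magic reg_e balanced.
Qed.
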